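(* Let $0<p<q$ be coprime integers. Then $\mathbb{M}(\mathrm{ch}_{p/q}(L,LR))=\mathbb{L}(p,q)$. In other words, the modular knot associated with the word $\mathrm{ch}_{p/q}(L,LR)$ is the $(p,q)$-torus knot, i.e. the closure of $(\sigma_1\sigma_2\cdots\sigma_{p-1})^q\in B_p$.
   Context: Christoffel words: for coprime $0<p<q$, the snake graph $S(p/q)$ is the set of unit squares of the $q\times p$ grid (width $q$, height $p$) meeting the diagonal from $(0,0)$ to $(q,p)$. The lower Christoffel word $\mathrm{ch}_{p/q}(A,B)$ is obtained by following the lower boundary path of $S(p/q)$ from $(0,0)$ to $(q,p)$ and writing $A$ for each step one unit to the right and $B$ for each step one unit right followed by one unit up; equivalently, it is the word $w_1\cdots w_q$ with $w_i=B$ if $\lfloor ip/q\rfloor>\lfloor (i-1)p/q\rfloor$ and $w_i=A$ otherwise (e.g. $\mathrm{ch}_{4/7}(A,B)=ABABABB$). $\mathrm{ch}_{p/q}(L,LR)$ denotes the word over $\{L,R\}$ obtained by substituting $A\mapsto L$, $B\mapsto LR$. Modular braid of a word: for a primitive word $W$ (not a proper power of a shorter word) over $\{L,R\}$ of length $m\ge2$, with $\mathrm{cyc}$ moving the first letter to the end, let $\mathrm{rank}_j(W)$ ($1\le j\le m$) be the rank of $\mathrm{cyc}^{j-1}(W)$ among the cyclic permutations of $W$ in ascending lexicographic order with $L<R$, and $\mathrm{rank}_{m+1}(W)=\mathrm{rank}_1(W)$. $\mathbb{M}(W)$ is the $m$-strand braid joining the $\mathrm{rank}_j(W)$-th top point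 to the $\mathrm{rank}_{j+1}(W)$-th bottom point by straight segments ($1\le j\le m$), the strand from a top point whose cyclic permutation begins with $L$ passing over one whose cyclic permutation begins with $R$ at each crossing. Its closure is a modular knot. Lorenz braid $\mathbb{L}(p,q)$: the braid with $p+q$ strands in which the $q$ leftmost top points are joined in order (order-preservingly) to the bottom points $p+1,\dots,p+q$, and the $p$ rightmost top points are joined in order to the bottom points $1,\dots,p$, by straight segments, strands from the left top part passing over strands from the right top part. Braids are compared as geometric braid diagrams. *)

From HB Require Import structures.
From mathcomp Require Import all_boot.
Set Implicit Arguments. Unset Strict Implicit. Unset Printing Implicit Defensive.

Inductive letter := L | R.
Definition letter_eqb (x y : letter) : bool :=
  match x, y with L, L | R, R => true | _, _ => false end.
Lemma letter_eqP : Equality.axiom letter_eqb.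
Proof. by case; case; constructor. Qed.
HB.instance Definition _ := hasDecEq.Build letter letter_eqP.

Definition letter_lt (x y : letter) : bool :=
  match x, y with L, R => true | _, _ => false end.

Fixpoint lexlt (s t : seq letter) : bool :=
  match s, t with
  | [::], [::] => false
  | [::], _ :: _ => true
  | _ :: _, [::] => false
  | x :: s', y :: t' => letter_lt x y || ((x == y) && lexlt s' t')
  end.

Definition christoffel {T : Type} (p q : nat) (A B : seq T) : seq T :=
  flatten [seq (if (i * p) %/ q > (i.-1 * p) %/ q then B else A) | i <- iota 1 q].

Definition ch_LLR (p q : nat) : seq letter := christoffel p q [:: L] [:: L; R].

(* A geometric braid diagram with straight strands: number of strands,
   list of strands (top point, bottom point), points numbered 1..n from
   left to right, and [over s t] = strand s passes over strand t. *)
Record braid := Braid {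
  bn : nat;
  bstrands : seq (nat * nat);
  bover : nat * nat -> nat * nat -> bool }.

Definition cross (s t : nat * nat) : bool :=
  ((s.1 < t.1) && (t.2 < s.2)) || ((t.1 < s.1) && (s.2 < t.2)).

Definition braid_eq (B1 B2 : braid) : Prop :=
  [/\ bn B1 = bn B2,
      perm_eq (bstrands B1) (bstrands B2) &
      forall s t, s \in bstrands B1 -> t \in bstrands B1 -> cross s t ->
        bover B1 s t = bover B2 s t].

(* cyc^{j-1}(W) for 1 <= j, indices taken mod |W| (so rank_{m+1} = rank_1) *)
Definition cycperm (W : seq letter) (j : nat) : seq letter :=
  rot (j.-1 %% size W) W.

Definition rank (W : seq letter) (j : nat) : nat :=
  (count (fun k => lexlt (rot k W) (cycperm W j)) (iota 0 (size W))).+1.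

Definition top_starts (W : seq letter) (x : letter) (r : nat) : bool :=
  has (fun j => (rank W j == r) && (head L (cycperm W j) == x))
      (iota 1 (size W)).

Definition modular_braid (W : seq letter) : braid :=
  {| bn := size W;
     bstrands := [seq (rank W j, rank W j.+1) | j <- iota 1 (size W)];
     bover := fun s t => top_starts W L s.1 && top_starts W R t.1 |}.

Definition primitive (W : seq letter) : Prop :=
  forall (u : seq letter) (k : nat), 1 < k -> W <> flatten (nseq k u).

Definition lorenz_braid (p q : nat) : braid :=
  {| bn := p + q;
     bstrands := [seq (i, p + i) | i <- iota 1 q] ++ [seq (q + i, i) | i <- iota 1 p];
     bover := fun s t => (s.1 <= q) && (q < t.1) |}.

From mathcomp Require Import all_boot zify.

Set Implicit Arguments.
Unset Strict Implicit.

(* The letter of ch_{p/q}(L, LR) at position k = 0, 1, ... is R exactly when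
   k p mod (p + q) lies in [q, p + q): the word is the coding of the rotation
   x |-> x + p of Z/(p + q) started at 0.  Its cyclic permutations are the
   codings started at the other points r = k p mod (p + q), and these codings
   are lexicographically ordered like their starting points, because two
   orbits keep their distance until the lower one reaches q - 1 while the
   upper one is already in [q, p + q).  So the j-th cyclic permutation has rank
   r + 1 with r = (j - 1) p mod (p + q), it begins with L iff r < q, and its
   strand in the modular braid goes from r + 1 to (r + p mod (p + q)) + 1:
   these are the strands of the Lorenz braid L(p, q), with the over/under rule
   of L(p, q).  The same monotonicity shows that no nontrivial rotation fixes
   the word, so it is primitive. *)

Definition coding_letter (q x : nat) : letter := if q <= x then R else L.

Definition rotation_word (p q r len : nat) : seq letter :=
  [seq coding_letter q ((r + i * p) %% (p + q)) | i <- iota 0 len].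

Section RotationWord.
Variables p q : nat.
Local Notation n := (p + q).
Local Notation word := (rotation_word p q).

Lemma size_rotation_word r len : size (word r len) = len.
Proof. by rewrite size_map size_iota. Qed.

Lemma rotation_word_cons r len :
  word r len.+1 = coding_letter q (r %% n) :: word (r + p) len.
Proof.
rewrite /rotation_word /= addn0; congr (_ :: _).
rewrite -[1]addn0 iotaDl -map_comp; apply: eq_map => i /=.
by rewrite mulnDl mul1n addnA.
Qed.

Lemma rotation_word_rcons r len :
  word r (len + 1) = rcons (word r len) (coding_letter q ((r + len * p) %% n)).
Proof. by rewrite /rotation_word iotaD map_cat /= cats1. Qed.

Lemma rotation_word_mod r len : word (r %% n) len = word r len.
Proof. by apply: eq_map => i; rewrite modnDml. Qed.

Lemma head_rotation_word r len :
  0 < len -> head L (word r len) = coding_letter q (r %% n).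
Proof. by case: len => // len _; rewrite rotation_word_cons. Qed.

Lemma rot1_rotation_word r : rot 1 (word r n) = word (r + p) n.
Proof.
case En: n => [|m]; first by [].
rewrite rotation_word_cons rot1_cons -addn1 rotation_word_rcons.
have -> : r + p + m * p = p * n + r by rewrite En; nia.
by rewrite modnMDl.
Qed.

Lemma rot_rotation_word r k : k <= n -> rot k (word r n) = word (r + k * p) n.
Proof.
elim: k => [|k IHk] lt_k_n; first by rewrite rot0 mul0n addn0.
rewrite -add1n rotD ?size_rotation_word ?IHk ?rot1_rotation_word; try lia.
by rewrite mulSn addnA addnAC.
Qed.

End RotationWord.

Lemma lexlt_irr (s : seq letter) : lexlt s s = false.
Proof. by elim: s => [|[] s IHs] //=; rewrite IHs. Qed.

Lemma lexlt_asym (s t : seq letter) : lexlt s t -> ~~ lexlt t s.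
Proof. by elim: s t => [|x s IHs] [|y t] //=; case: x; case: y => //= /IHs. Qed.

Lemma lexlt_cons2 (x : letter) s t : lexlt (x :: s) (x :: t) = lexlt s t.
Proof. by case: x. Qed.

Section MulMod.
Variables n p : nat.
Hypothesis n_p_coprime : coprime n p.

Lemma mulmod_inj k1 k2 : k1 < n -> k2 < n ->
  (k1 * p) %% n = (k2 * p) %% n -> k1 = k2.
Proof.
wlog le_k21 : k1 k2 / k2 <= k1.
  by move=> W lt1 lt2 e; case: (leqP k2 k1) => h; [|symmetry]; apply: W; lia.
move=> lt_k1n _ /eqP; rewrite eqn_mod_dvd ?leq_mul2r ?le_k21 ?orbT //.
rewrite -mulnBl Gauss_dvdl //; case: (posnP (k1 - k2)) => [|pos]; first lia.
by move=> /(dvdn_leq pos); lia.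
Qed.

Lemma perm_iota_mulmod : perm_eq [seq (k * p) %% n | k <- iota 0 n] (iota 0 n).
Proof.
have [->|n_gt0] := posnP n; first by [].
have uniq_mulmod : uniq [seq (k * p) %% n | k <- iota 0 n].
  rewrite map_inj_in_uniq ?iota_uniq // => a b.
  by rewrite !mem_iota !add0n; exact: mulmod_inj.
have sub_iota : {subset [seq (k * p) %% n | k <- iota 0 n] <= iota 0 n}.
  by move=> _ /mapP[k _ ->]; rewrite mem_iota add0n ltn_pmod.
apply: uniq_perm; rewrite ?iota_uniq //.
by have [] := uniq_min_size uniq_mulmod sub_iota; rewrite size_map.
Qed.

Lemma mulmod_surj x : x < n -> exists2 k, k < n & (k * p) %% n = x.
Proof.
rewrite -[x < n]/(0 <= x < 0 + n) -mem_iota -(perm_mem perm_iota_mulmod).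
by case/mapP => k; rewrite mem_iota => /andP[_ lt_kn] ->; exists k.
Qed.

End MulMod.

Section RotationWordOrder.
Variables p q : nat.
Hypothesis q_gt0 : 0 < q.
Local Notation n := (p + q).
Local Notation word := (rotation_word p q).

Lemma ltn_addp_mod x y :
  x < y < n -> (x < q) = (y < q) -> (x + p) %% n < (y + p) %% n.
Proof.
move=> /andP[lt_xy lt_yn]; case: (ltnP x q) => [lt_xq /esym lt_yq | le_qx _].
  by rewrite !modn_small; lia.
have shift z : q <= z < n -> (z + p) %% n = z - q.
  by move=> hz; rewrite (_ : z + p = z - q + n) ?modnDr ?modn_small; lia.
by rewrite !shift; lia.
Qed.

Lemma lexlt_rotation_word_hit len r r' : r < r' < n ->
  (exists2 i, i < len & (r + i * p) %% n = q.-1) -> lexlt (word r len) (word r' len).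
Proof.
elim: len r r' => [|len IHlen] r r' lt_rr'n [i lt_i_len hit]; first by [].
have [lt_rn lt_r'n] : r < n /\ r' < n by lia.
rewrite !rotation_word_cons !modn_small // /coding_letter.
have [same_side | crossing] := eqVneq (r < q) (r' < q); last first.
  have [lt_rq le_qr'] : r < q /\ q <= r'.
    by move: crossing; case: ltnP; case: ltnP; lia.
  by rewrite leqNgt lt_rq le_qr'.
rewrite (_ : q <= r' = (q <= r)); last by rewrite !(leqNgt q) same_side.
rewrite lexlt_cons2 -rotation_word_mod -[word (r' + p) _]rotation_word_mod.
apply: IHlen; first by rewrite ltn_addp_mod // ltn_pmod //; lia.
case: i lt_i_len hit => [|i] lt_i_len hit.
  move: hit; rewrite mul0n addn0 modn_small // => r_eq.
  by move: same_side; rewrite r_eq ltn_predL q_gt0 => /esym; lia.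
by exists i; rewrite // modnDml -hit mulSn addnA.
Qed.

Hypothesis n_p_coprime : coprime n p.

Lemma lexlt_rotation_word a b : a < n -> b < n ->
  lexlt (word a n) (word b n) = (a < b).
Proof.
have lt_word a' b' : a' < b' < n -> lexlt (word a' n) (word b' n).
  move=> lt_a'b'n; apply: lexlt_rotation_word_hit => //.
  have n_gt0 : 0 < n by lia.
  have [k lt_kn hit] := mulmod_surj n_p_coprime (ltn_pmod (q.-1 + n - a') n_gt0).
  exists k => //; rewrite -modnDmr hit modnDmr.
  by rewrite (_ : a' + _ = q.-1 + n) ?modnDr ?modn_small; lia.
move=> lt_an lt_bn; case: (ltngtP a b) => [lt_ab | lt_ba | ->].
- by apply: lt_word; rewrite lt_ab.
- by apply/negP => /lexlt_asym; rewrite lt_word ?lt_ba.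
- exact: lexlt_irr.
Qed.

Lemma rotation_word_inj a b : a < n -> b < n -> word a n = word b n -> a = b.
Proof.
move=> lt_an lt_bn eq_ab.
move: (lexlt_rotation_word lt_an lt_bn) (lexlt_rotation_word lt_bn lt_an).
by rewrite eq_ab lexlt_irr; case: ltngtP.
Qed.

End RotationWordOrder.

Section Christoffel.
Variables p q : nat.
Hypothesis lt_pq : p < q.
Local Notation n := (p + q).

Lemma divn_christoffel_step m :
  (m.+1 * p) %/ q = (m * p) %/ q + (q <= (m * p) %% q + p).
Proof.
have q_gt0 : 0 < q by lia.
by rewrite mulSnr divnD // (divn_small lt_pq) (modn_small lt_pq) addn0.
Qed.

Lemma modn_christoffel_point m :
  ((m + (m * p) %/ q) * p) %% n = (m * p) %% q.
Proof.
have q_gt0 : 0 < q by lia.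
have lt_mod : (m * p) %% q < n by rewrite ltn_addl ?ltn_pmod.
have mp_eq := divn_eq (m * p) q.
rewrite (_ : _ * p = (m * p) %/ q * n + (m * p) %% q); last by nia.
by rewrite modnMDl modn_small.
Qed.

Lemma flatten_christoffel_blocks m :
  flatten [seq (if (i * p) %/ q > (i.-1 * p) %/ q then [:: L; R] else [:: L])
          | i <- iota 1 m]
  = rotation_word p q 0 (m + (m * p) %/ q).
Proof.
elim: m => [|m IHm]; first by rewrite mul0n div0n.
rewrite -[m.+1]addn1 iotaD map_cat flatten_cat IHm /= cats0 add1n addn1.
rewrite divn_christoffel_step.
set a := (m * p) %/ q; set r := (m * p) %% q.
have lt_rq : r < q by rewrite ltn_pmod //; lia.
have point : ((m + a) * p) %% n = r := modn_christoffel_point m.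
case: (leqP q (r + p)) => [le_q_rp | lt_rp_q].
  rewrite addn1 ltnSn (_ : m.+1 + a.+1 = m + a + 1 + 1); last by lia.
  rewrite !rotation_word_rcons -!cats1 -catA !add0n addn1 mulSnr -modnDml point.
  by rewrite modn_small /coding_letter ?le_q_rp 1?leqNgt ?lt_rq //; lia.
rewrite addn0 ltnn (_ : m.+1 + a = m + a + 1); last by lia.
by rewrite rotation_word_rcons -cats1 add0n point /coding_letter leqNgt lt_rq.
Qed.

Lemma ch_LLR_rotation_word : ch_LLR p q = rotation_word p q 0 n.
Proof.
rewrite /ch_LLR /christoffel flatten_christoffel_blocks mulKn ?(addnC q) //.
by apply: leq_ltn_trans lt_pq.
Qed.

End Christoffel.

Lemma rot_flatten_nseq (T : Type) k (u : seq T) :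
  rot (size u) (flatten (nseq k u)) = flatten (nseq k u).
Proof.
case: k => [|k]; first by case: (size u).
by rewrite [in LHS]/= rot_size_cat -[k.+1]addn1 nseqD flatten_cat /= cats0.
Qed.

Lemma primitive_rot (W : seq letter) : 0 < size W ->
  (forall k, 0 < k < size W -> rot k W <> W) -> primitive W.
Proof.
move=> W_gt0 rot_neq u [|[|k]] // _ W_eq; apply: (rot_neq (size u)).
  have size_W : size W = k.+2 * size u.
    by rewrite W_eq size_flatten /shape map_nseq sumn_nseq mulnC.
  by move: W_gt0; rewrite size_W; nia.
by rewrite W_eq rot_flatten_nseq.
Qed.

Lemma count_ltn_iota b m : count (fun x => x < b) (iota 0 m) = minn b m.
Proof.
elim: m => [|m IHm]; first by rewrite minn0.
rewrite -addn1 iotaD count_cat IHm /= addn0; case: (ltnP m b); lia.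
Qed.

Lemma lorenz_strands_addmod p q :
  [seq (x.+1, ((x + p) %% (p + q)).+1) | x <- iota 0 (p + q)]
  = bstrands (lorenz_braid p q).
Proof.
rewrite /= [in iota 0 _]addnC iotaD map_cat add0n.
have iota_shift a m : iota a.+1 m = [seq x.+1 | x <- iota a m].
  by rewrite -addn1 addnC iotaDl; apply: eq_map => x; rewrite add1n.
rewrite !iota_shift (_ : iota q p = [seq q + x | x <- iota 0 p]); last first.
  by rewrite -iotaDl addn0.
rewrite -!map_comp; congr (_ ++ _); apply/eq_in_map => x;
  rewrite mem_iota add0n => /andP[_ lt_x] /=.
  by rewrite modn_small ?addnS ?(addnC p) //; lia.
rewrite (_ : q + x + p = x + (p + q)) ?modnDr ?modn_small ?addnS //; lia.
Qed.

Section ModularBraidOfChristoffel.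
Variables p q : nat.
Hypotheses (lt_pq : p < q) (p_q_coprime : coprime p q).
Local Notation n := (p + q).
Local Notation word := (rotation_word p q).
Local Notation W := (word 0 n).

Let q_gt0 : 0 < q. Proof. lia. Qed.
Let n_gt0 : 0 < n. Proof. lia. Qed.
Let n_p_coprime : coprime n p. Proof. by rewrite /coprime gcdnC gcdnDl. Qed.

Lemma rot_W k : k < n -> rot k W = word ((k * p) %% n) n.
Proof. by move=> lt_kn; rewrite rot_rotation_word 1?ltnW // rotation_word_mod. Qed.

Lemma cycperm_W j : cycperm W j = word ((j.-1 * p) %% n) n.
Proof. by rewrite /cycperm size_rotation_word rot_W ?ltn_pmod // modnMml. Qed.

Lemma rank_W j : rank W j = ((j.-1 * p) %% n).+1.
Proof.
rewrite /rank size_rotation_word cycperm_W; congr S.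
set r := (j.-1 * p) %% n; have lt_rn : r < n by rewrite ltn_pmod.
rewrite (@eq_in_count _ _ (fun k => (k * p) %% n < r)); last first.
  move=> k; rewrite mem_iota add0n => lt_kn.
  by rewrite rot_W // lexlt_rotation_word ?ltn_pmod.
rewrite -(count_map (fun k => (k * p) %% n) (fun x => x < r)).
rewrite (permP (perm_iota_mulmod n_p_coprime)) count_ltn_iota.
exact/minn_idPl/ltnW.
Qed.

Lemma top_starts_W x j : j \in iota 1 n ->
  top_starts W x (rank W j) = (coding_letter q (rank W j).-1 == x).
Proof.
move=> j_in; rewrite /top_starts size_rotation_word; apply/hasP/idP.
  case=> j' _ /andP[/eqP <- /eqP <-].
  by rewrite rank_W cycperm_W head_rotation_word ?modn_mod.
move=> /eqP <-; exists j; rewrite // eqxx.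
by rewrite rank_W cycperm_W head_rotation_word ?modn_mod /= ?eqxx.
Qed.

Lemma perm_strands_W :
  perm_eq (bstrands (modular_braid W)) (bstrands (lorenz_braid p q)).
Proof.
rewrite -lorenz_strands_addmod /= size_rotation_word.
rewrite (_ : [seq _ | j <- iota 1 n] =
             [seq (x.+1, ((x + p) %% n).+1) | x <- [seq (k * p) %% n | k <- iota 0 n]]).
  exact/perm_map/perm_iota_mulmod.
rewrite -map_comp -[1]/(1 + 0) iotaDl -map_comp; apply: eq_map => k /=.
by rewrite !rank_W /= add0n mulSn (addnC p (k * p)) modnDml.
Qed.

Lemma bover_W s t :
  s \in bstrands (modular_braid W) -> t \in bstrands (modular_braid W) ->
  bover (modular_braid W) s t = bover (lorenz_braid p q) s t.
Proof.
rewrite /= size_rotation_word => /mapP[j j_in ->] /mapP[j' j'_in ->] /=.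
rewrite !top_starts_W // !rank_W /coding_letter /= ltnS.
by case: (leqP q ((j.-1 * p) %% n)); case: (leqP q ((j'.-1 * p) %% n)).
Qed.

Lemma primitive_W : primitive W.
Proof.
apply: primitive_rot => [|k]; rewrite size_rotation_word // => /andP[k_gt0 lt_kn].
rewrite rot_W //.
move=> /(rotation_word_inj q_gt0 n_p_coprime (ltn_pmod _ n_gt0) n_gt0).
by rewrite -(mod0n n) -(mul0n p) => /(mulmod_inj n_p_coprime lt_kn n_gt0); lia.
Qed.

End ModularBraidOfChristoffel.

Theorem theorem4p2 (p q : nat) :
  0 < p -> p < q -> coprime p q ->
  primitive (ch_LLR p q) /\ 2 <= size (ch_LLR p q) /\
  braid_eq (modular_braid (ch_LLR p q)) (lorenz_braid p q).
Proof.
move=> p_gt0 lt_pq p_q_coprime; rewrite ch_LLR_rotation_word //.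
split; first exact: primitive_W.
split; first by rewrite size_rotation_word; lia.
split; first by rewrite /= size_rotation_word.
- exact: perm_strands_W.
- by move=> s t s_in t_in _; apply: bover_W.
Qed.
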